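(* Over directed graphs, there are first-order (FO) node classifiers expressible by ACR-GNNs which are not expressible in $\text{C}^2$. In particular, $\varphi_{\mathit{Lin}}(x)$ is such a classifier.
   Context: A directed graph is $G=(V,E,\lambda)$ with finite $V$, loop-free $E\subseteq V\times V$ and $\lambda:V\to\{0,1\}^d$, viewed as a first-order structure with unary predicates $P_1,\dots,P_d$ and binary predicate $E$. A node classifier is a formula with one free variable (or a function assigning a truth value to each node). $\text{C}^2$ is the two-variable fragment of first-order logic extended with counting quantifiers $\exists_k$. An ACR-GNN layer for directed graphs is a tuple $(\overleftarrow{\mathsf{agg}}, \overrightarrow{\mathsf{agg}}, \mathsf{comb}, \mathsf{read})$ updating labels by $\lambda'(v)=\mathsf{comb}\big(\lambda(v), \overleftarrow{\mathsf{agg}}(\{\!\{\lambda(w)\}\!\}_{w\in\overleftarrow{N}_G(v)}), \overrightarrow{\mathsf{agg}}(\{\!\{\lambda(w)\}\!\}_{w\in\overrightarrow{N}_G(v)}), \mathsf{read}(\{\!\{\lambda(w)\}\!\}_{w\in V})\big)$, where $\{\!\{\cdot\}\!\}$ denotes a multiset and $\overleftarrow{N}_G(v),\overrightarrow{N}_G(v)$ are in- and out-neighbourhoods; an ACR-GNN classifier is a fixed number of layers followed by a classification function. $\varphi_{\mathit{Lin}}(x)$ accepts a node of $G$ iff the edge relation of $G$ is a strict linear order. *)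

From HB Require Import structures.
From mathcomp Require Import all_boot all_order all_algebra.
From mathcomp Require Import reals.

Set Implicit Arguments.
Unset Strict Implicit.
Unset Printing Implicit Defensive.

Import GRing.Theory Num.Theory.

Record graph (d : nat) := Graph {
  vert :> finType;
  edge : rel vert;
  edge_irr : irreflexive edge;
  lab : vert -> {ffun 'I_d -> bool}
}.

Definition node_classifier (d : nat) := forall G : graph d, vert G -> bool.

Definition strict_linear_order (T : finType) (e : rel T) : bool :=
  [&& [forall u, ~~ e u u],
      [forall u, forall w, forall z, e u w && e w z ==> e u z] &
      [forall u, forall w, (u != w) ==> e u w || e w u]].

Definition phi_Lin (d : nat) : node_classifier d :=
  fun G _ => strict_linear_order (@edge d G).
Arguments phi_Lin d : clear implicits.

Inductive fo_form (d : nat) :=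
  | FPred of 'I_d & nat
  | FEdge of nat & nat
  | FEq of nat & nat
  | FNeg of fo_form d
  | FAnd of fo_form d & fo_form d
  | FEx of nat & fo_form d.

Definition upd (T : Type) (a : nat -> T) (n : nat) (u : T) : nat -> T :=
  fun m => if m == n then u else a m.

Fixpoint fo_sat d (G : graph d) (a : nat -> vert G) (f : fo_form d) : bool :=
  match f with
  | FPred i n => lab (a n) i
  | FEdge n m => edge (a n) (a m)
  | FEq n m => a n == a m
  | FNeg g => ~~ fo_sat a g
  | FAnd g h => fo_sat a g && fo_sat a h
  | FEx n g => [exists u, fo_sat (upd a n u) g]
  end.

Fixpoint fo_free d (n : nat) (f : fo_form d) : bool :=
  match f with
  | FPred _ m => m == n
  | FEdge m k | FEq m k => (m == n) || (k == n)
  | FNeg g => fo_free n g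
  | FAnd g h => fo_free n g || fo_free n h
  | FEx m g => (m != n) && fo_free n g
  end.

(* c is FO-expressible: some FO formula with (at most) the free variable 0 (= x) *)
Definition fo_expressible d (c : node_classifier d) : Prop :=
  exists f : fo_form d, (forall n, n != 0 -> ~~ fo_free n f) /\
    forall (G : graph d) (v : vert G), fo_sat (fun _ => v) f = c G v.

(* C^2: two variables (false = x, true = y) and counting quantifiers   *)
Inductive c2_form (d : nat) :=
  | CPred of 'I_d & bool
  | CEdge of bool & bool
  | CEq of bool & bool
  | CNeg of c2_form d
  | CAnd of c2_form d & c2_form d
  | CExists of nat & bool & c2_form d.  (* CExists k z f : "exists at least k z. f" *)

Definition upd2 (T : Type) (a : bool -> T) (z : bool) (u : T) : bool -> T :=
  fun z' => if z' == z then u else a z'.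

Fixpoint c2_sat d (G : graph d) (a : bool -> vert G) (f : c2_form d) : bool :=
  match f with
  | CPred i z => lab (a z) i
  | CEdge z1 z2 => edge (a z1) (a z2)
  | CEq z1 z2 => a z1 == a z2
  | CNeg g => ~~ c2_sat a g
  | CAnd g h => c2_sat a g && c2_sat a h
  | CExists k z g => k <= #|[pred u | c2_sat (upd2 a z u) g]|
  end.

Fixpoint c2_free d (z : bool) (f : c2_form d) : bool :=
  match f with
  | CPred _ z' => z' == z
  | CEdge z1 z2 | CEq z1 z2 => (z1 == z) || (z2 == z)
  | CNeg g => c2_free z g
  | CAnd g h => c2_free z g || c2_free z h
  | CExists _ z' g => (z' != z) && c2_free z g
  end.

Definition c2_expressible d (c : node_classifier d) : Prop :=
  exists f : c2_form d, ~~ c2_free true f /\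
    forall (G : graph d) (v : vert G), c2_sat (fun _ => v) f = c G v.

(* Multisets are represented by sequences, and every function taking a *)
(* multiset is required to be invariant under permutation.             *)
Section ACR.
Variable R : realType.

Record acr_layer (din dout : nat) := ACRLayer {
  dain : nat; daout : nat; dread : nat;
  agg_in : seq 'rV[R]_din -> 'rV[R]_dain;
  agg_out : seq 'rV[R]_din -> 'rV[R]_daout;
  comb : 'rV[R]_din -> 'rV[R]_dain -> 'rV[R]_daout -> 'rV[R]_dread -> 'rV[R]_dout;
  read : seq 'rV[R]_din -> 'rV[R]_dread;
  agg_in_perm : forall s t, perm_eq s t -> agg_in s = agg_in t;
  agg_out_perm : forall s t, perm_eq s t -> agg_out s = agg_out t;
  read_perm : forall s t, perm_eq s t -> read s = read t
}.

Definition in_nbhd d (G : graph d) (v : vert G) : seq (vert G) :=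
  [seq w <- enum (vert G) | edge w v].
Definition out_nbhd d (G : graph d) (v : vert G) : seq (vert G) :=
  [seq w <- enum (vert G) | edge v w].

Definition apply_layer din dout (L : acr_layer din dout) d (G : graph d)
    (lam : vert G -> 'rV[R]_din) : vert G -> 'rV[R]_dout :=
  fun v => @comb _ _ L (lam v)
              (@agg_in _ _ L [seq lam w | w <- in_nbhd v])
              (@agg_out _ _ L [seq lam w | w <- out_nbhd v])
              (@read _ _ L [seq lam w | w <- enum (vert G)]).

Inductive acr_gnn : nat -> Type :=
  | GClass (n : nat) of ('rV[R]_n -> bool) : acr_gnn n
  | GLayer (n m : nat) of acr_layer n m & acr_gnn m : acr_gnn n.

Fixpoint run_gnn n (N : acr_gnn n) d (G : graph d) : (vert G -> 'rV[R]_n) -> vert G -> bool :=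
  match N with
  | GClass _ cls => fun lam v => cls (lam v)
  | GLayer _ _ L N' => fun lam => @run_gnn _ N' d G (apply_layer L lam)
  end.

Definition init_label d (G : graph d) (v : vert G) : 'rV[R]_d :=
  (\row_i (lab v i)%:R)%R.

Definition acr_classifier d (N : acr_gnn d) : node_classifier d :=
  fun G v => @run_gnn d N d G (@init_label d G) v.

Definition acr_expressible d (c : node_classifier d) : Prop :=
  exists N : acr_gnn d, forall (G : graph d) (v : vert G), @acr_classifier d N G v = c G v.

End ACR.

(* phi_Lin is first order: irreflexivity, transitivity and totality are
   first-order sentences.

   An ACR-GNN decides it through in-degrees. An irreflexive relation on a finite
   set is a strict linear order iff in-degrees are pairwise distinct and strictly
   increase along every edge: the in-neighbours of w then have distinct in-degrees
   below indeg w, hence realise all of them, so every u with indeg u < indeg w is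
   an in-neighbour of w. One layer computes in-degrees, a second one checks the
   edge condition by max-aggregation and distinctness by a readout, and a third
   one broadcasts the conjunction of the local checks.

   A C^2 formula of quantifier rank Q whose counting
   thresholds are at most K cannot tell the linear order on N points from the same
   order with the edge between P and P+2 reversed, once P and N-P-3 are at least
   Q(K+2). This is a counting game with two pebbles: with q rounds left, a pebble
   within q(K+2) of an end is matched by a pebble on the same point, and a pebble
   elsewhere by any pebble elsewhere. Seen from a middle pebble, the middle points
   on either side number at least K+2 in the order and at least K in the twisted
   order, which is all a threshold K can count. *)

From mathcomp Require Import all_boot all_order all_algebra.
From mathcomp Require Import reals.
From mathcomp Require Import zify.

Set Implicit Arguments.
Unset Strict Implicit.
Unset Printing Implicit Defensive.

Lemma strict_linear_orderP (T : finType) (e : rel T) :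
  reflect [/\ irreflexive e, transitive e & forall u w, u != w -> e u w || e w u]
          (strict_linear_order e).
Proof.
apply: (iffP and3P) => [[/forallP irr /forallP tr /forallP tot]|[irr tr tot]].
  split=> [u|w u z euw ewz|u w]; first exact/negbTE.
    by have /forallP/(_ w)/forallP/(_ z)/implyP-> := tr u; rewrite ?euw.
  by have /forallP/(_ w)/implyP := tot u.
split; apply/forallP => u; first by rewrite irr.
  by do 2 apply/forallP => ?; apply/implyP => /andP[]; apply: tr.
by apply/forallP => w; apply/implyP; apply: tot.
Qed.

Definition fo_lin d : fo_form d :=
  FAnd (FNeg (FEx 1 (FEdge d 1 1)))
    (FAnd (FNeg (FEx 1 (FEx 2 (FEx 3
            (FAnd (FAnd (FEdge d 1 2) (FEdge d 2 3)) (FNeg (FEdge d 1 3)))))))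
          (FNeg (FEx 1 (FEx 2
            (FAnd (FNeg (FEq d 1 2)) (FAnd (FNeg (FEdge d 1 2)) (FNeg (FEdge d 2 1)))))))).

Lemma phi_Lin_fo d : fo_expressible (phi_Lin d).
Proof.
exists (fo_lin d); split=> [[|[|[|[|n]]]] //|G v].
rewrite /phi_Lin /strict_linear_order /= /upd /= !negb_exists.
congr [&& _, _ & _]; apply: eq_forallb => u; rewrite ?negb_exists //.
  apply: eq_forallb => w; rewrite negb_exists; apply: eq_forallb => z.
  by case: edge; case: edge; case: edge.
by apply: eq_forallb => w; case: (u != w); case: edge; case: edge.
Qed.

Definition indeg (T : finType) (e : rel T) (v : T) := #|[pred u | e u v]|.

Definition indeg_monotone (T : finType) (e : rel T) :=
  [forall u, forall w, e u w ==> (indeg e u < indeg e w)].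

Section InDegree.
Variables (T : finType) (e : rel T).
Local Notation indeg := (indeg e).

Lemma indeg_lt_edge : irreflexive e -> transitive e -> forall u v, e u v -> indeg u < indeg v.
Proof.
move=> irr tr u v euv; apply: proper_card; apply/properP; split.
  by apply/subsetP => w; rewrite !inE => ewu; apply: tr euv.
by exists u; rewrite !inE ?irr.
Qed.

Lemma indeg_inj_linear : strict_linear_order e -> injective indeg.
Proof.
case/strict_linear_orderP => irr tr tot u w eq_uw; case: (eqVneq u w) => // neq_uw.
by have /orP[] := tot u w neq_uw => /(indeg_lt_edge irr tr); rewrite eq_uw ltnn.
Qed.

Lemma edge_of_indeg_lt : injective indeg -> (forall u v, e u v -> indeg u < indeg v) ->
  forall u w, indeg u < indeg w -> e u w.
Proof.
move=> inj lt_edge u w lt_uw.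
pose s := map indeg (enum [pred x | e x w]).
have s_uniq : uniq s by rewrite map_inj_uniq ?enum_uniq.
have s_sub : {subset s <= iota 0 (indeg w)}.
  by move=> i /mapP[x]; rewrite mem_enum inE mem_iota add0n => /lt_edge ? ->.
have s_size : size (iota 0 (indeg w)) <= size s by rewrite size_iota size_map -cardE.
have [_ /(_ (indeg u))] := uniq_min_size s_uniq s_sub s_size.
by rewrite mem_iota add0n lt_uw => /mapP[x]; rewrite mem_enum inE => exw /inj ->.
Qed.

Lemma strict_linear_order_indeg : irreflexive e -> injective indeg ->
  (forall u v, e u v -> indeg u < indeg v) -> strict_linear_order e.
Proof.
move=> irr inj lt_edge; have lt_edgeP := edge_of_indeg_lt inj lt_edge.
apply/strict_linear_orderP; split=> // [w u z /lt_edge uw /lt_edge wz|u w neq_uw].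
  by apply: lt_edgeP; apply: ltn_trans wz.
have : indeg u != indeg w by apply: contra neq_uw => /eqP/inj->.
by rewrite neq_ltn => /orP[] /lt_edgeP ->; rewrite ?orbT.
Qed.

Lemma strict_linear_order_indegE :
  irreflexive e -> strict_linear_order e = indeg_monotone e && injectiveb indeg.
Proof.
move=> irr; apply/idP/andP => [lin|[/forallP mono /injectiveP inj]].
  split; last exact/injectiveP/indeg_inj_linear.
  case/strict_linear_orderP: lin => _ tr _.
  by do 2 apply/forallP => ?; apply/implyP; apply: indeg_lt_edge.
apply: strict_linear_order_indeg => // u w euw.
by have /forallP/(_ w)/implyP := mono u; apply.
Qed.

End InDegree.

Lemma size_in_nbhd d (G : graph d) (v : G) : size (in_nbhd v) = indeg (@edge d G) v.
Proof. by rewrite /in_nbhd size_filter /indeg cardE enumT /enum_mem size_filter. Qed.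

Section InDegreeGNN.
Variable R : realType.
Import Order.TTheory GRing.Theory Num.Theory.
Local Open Scope ring_scope.

Definition scalar_row (x : R) : 'rV[R]_1 := const_mx x.

Definition indicator_row (b : bool) := scalar_row b%:R.

(* The default [-1] lets a node without in-neighbours pass the comparison with
   its in-degree [0]. *)
Definition max_entry (s : seq 'rV[R]_1) : R := \big[Num.max/-1]_(r <- s) r 0 0.

Definition is_one (r : 'rV[R]_1) := r 0 0 == 1.

Definition indeg_layer d : acr_layer R d 1 :=
  @ACRLayer R d 1 1 1 1
    (fun s => scalar_row (size s)%:R) (fun _ => 0) (fun _ a _ _ => a) (fun _ => 0)
    (fun s t st => congr1 (fun n => scalar_row n%:R) (perm_size st))
    (fun _ _ _ => erefl) (fun _ _ _ => erefl).

Definition local_check_layer : acr_layer R 1 1 :=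
  @ACRLayer R 1 1 1 1 1
    (fun s => scalar_row (max_entry s)) (fun _ => 0)
    (fun x a _ c => indicator_row ((a 0 0 < x 0 0) && is_one c))
    (fun s => indicator_row (uniq s))
    (fun s t st => congr1 scalar_row (perm_big _ st)) (fun _ _ _ => erefl)
    (fun s t st => congr1 indicator_row (perm_uniq st)).

Definition global_check_layer : acr_layer R 1 1 :=
  @ACRLayer R 1 1 1 1 1
    (fun _ => 0) (fun _ => 0) (fun _ _ _ c => c) (fun s => indicator_row (all is_one s))
    (fun _ _ _ => erefl) (fun _ _ _ => erefl)
    (fun s t st => congr1 indicator_row (perm_all _ st)).

Definition indeg_gnn d : acr_gnn R d :=
  GLayer (indeg_layer d) (GLayer local_check_layer (GLayer global_check_layer (GClass is_one))).

Lemma is_one_indicator b : is_one (indicator_row b) = b.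
Proof. by rewrite /is_one mxE; case: b; rewrite ?eqxx // eq_sym oner_eq0. Qed.

Lemma max_entry_lt (T : Type) (f : T -> nat) (s : seq T) n :
  (max_entry [seq scalar_row (f w)%:R | w <- s] < n%:R) = all (fun w => f w < n)%N s.
Proof.
elim: s => [|w s IH]; last by rewrite /max_entry /= big_cons gt_max IH mxE ltr_nat.
by rewrite /max_entry big_nil (lt_le_trans (ltrN10 R)) ?ler0n.
Qed.

Lemma uniq_scalar_rows (T : eqType) (f : T -> nat) (s : seq T) :
  uniq [seq scalar_row (f w)%:R | w <- s] = uniq (map f s).
Proof.
rewrite (map_comp (fun n : nat => scalar_row n%:R)) map_inj_uniq // => m n.
by move/(congr1 (fun r : 'rV[R]_1 => r 0 0)); rewrite !mxE => /eqP; rewrite eqr_nat => /eqP.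
Qed.

Lemma indeg_gnnE d (G : graph d) v :
  @acr_classifier R d (indeg_gnn d) G v =
  indeg_monotone (@edge d G) && injectiveb (indeg (@edge d G)).
Proof.
have layer1 (s : seq G) :
    [seq scalar_row (size [seq init_label R u | u <- in_nbhd w])%:R | w <- s] =
    [seq scalar_row (indeg (@edge d G) w)%:R | w <- s].
  by apply: eq_map => w; rewrite size_map size_in_nbhd.
rewrite /acr_classifier /= /apply_layer /= is_one_indicator all_map.
under eq_all => w do
  rewrite /= !layer1 !mxE max_entry_lt uniq_scalar_rows size_map size_in_nbhd !is_one_indicator.
rewrite /injectiveb /dinjectiveb; case: (boolP (uniq _)) => _; last first.
  by rewrite andbF; apply/allP => /(_ v (mem_enum _ v)); rewrite andbF.
rewrite andbT; under eq_all => w do rewrite andbT.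
apply/allP/forallP => [mono u|mono w _].
  apply/forallP => w; apply/implyP => euw.
  by have /allP := mono w (mem_enum _ w); apply; rewrite mem_filter euw mem_enum.
by apply/allP => u; rewrite mem_filter => /andP[euw _]; have /forallP/(_ w)/implyP := mono u; apply.
Qed.
End InDegreeGNN.

Lemma phi_Lin_acr (R : realType) d : acr_expressible R (phi_Lin d).
Proof.
exists (indeg_gnn R d) => G v.
by rewrite indeg_gnnE /phi_Lin strict_linear_order_indegE //; apply: edge_irr.
Qed.

Lemma minnD_trunc K x y : minn K (x + y) = minn K (minn K x + minn K y).
Proof. lia. Qed.

Lemma big_minn_trunc_eq (I : Type) (r : seq I) (P : pred I) K (x y : I -> nat) :
  (forall i, minn K (x i) = minn K (y i)) ->
  minn K (\sum_(i <- r | P i) x i) = minn K (\sum_(i <- r | P i) y i).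
Proof.
move=> xy; elim/big_rec2: _ => // i m n _ IH.
by rewrite minnD_trunc xy IH -minnD_trunc.
Qed.

Lemma card_preim_sum (T C : finType) (c : T -> C) (p : pred C) :
  #|[pred a | p (c a)]| = \sum_(k | p k) #|[pred a | c a == k]|.
Proof.
rewrite -sum1_card (partition_big c p) //=.
apply: eq_bigr => k pk; rewrite sum1_card; apply: eq_card => a.
by rewrite unfold_in !inE; case: eqP => [->|]; rewrite ?pk ?andbF.
Qed.


Section TruncatedCounting.
Variables (T1 T2 C : finType) (c1 : T1 -> C) (c2 : T2 -> C) (K : nat).
Hypothesis K_gt0 : 0 < K.
Hypothesis trunc_card_class : forall c,
  minn K #|[pred a | c1 a == c]| = minn K #|[pred b | c2 b == c]|.

Lemma colour_realized c : [exists a, c1 a == c] = [exists b, c2 b == c].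
Proof.
have realized (T : finType) (col : T -> C) :
    [exists a, col a == c] = (0 < #|[pred a | col a == c]|).
  by apply/existsP/card_gt0P => -[a]; exists a.
by rewrite !realized; have := trunc_card_class c; lia.
Qed.

Lemma trunc_card_preim (p : pred C) :
  minn K #|[pred a | p (c1 a)]| = minn K #|[pred b | p (c2 b)]|.
Proof. by rewrite !card_preim_sum; apply: big_minn_trunc_eq. Qed.

Lemma leq_card_transfer (P1 : pred T1) (P2 : pred T2) k : k <= K ->
  (forall a b, c1 a = c2 b -> P1 a = P2 b) -> (k <= #|P1|) = (k <= #|P2|).
Proof.
move=> kK compat.
pose p c := [exists a, (c1 a == c) && P1 a].
have E1 : #|P1| = #|[pred a | p (c1 a)]|.
  apply: eq_card => a; rewrite inE unfold_in.
  apply/idP/existsP => [P1a|[a' /andP[/eqP ca' P1a']]]; first by exists a; rewrite eqxx.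
  have /existsP[b /eqP cb] : [exists b, c2 b == c1 a].
    by rewrite -colour_realized; apply/existsP; exists a'; rewrite ca'.
  by rewrite (compat a b) // -(compat a' b) // ca'.
have E2 : #|P2| = #|[pred b | p (c2 b)]|.
  apply: eq_card => b; rewrite inE unfold_in.
  apply/idP/existsP => [P2b|[a /andP[/eqP cab P1a]]]; last by rewrite -(compat a b).
  have /existsP[a /eqP cab] : [exists a, c1 a == c2 b].
    by rewrite colour_realized; apply/existsP; exists b.
  by exists a; rewrite cab eqxx (compat a b).
by have := trunc_card_preim p; rewrite -E1 -E2; lia.
Qed.

End TruncatedCounting.

Fixpoint c2_rank d (f : c2_form d) : nat :=
  match f with
  | CNeg g => c2_rank g
  | CAnd g h => maxn (c2_rank g) (c2_rank h)
  | CExists _ _ g => (c2_rank g).+1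
  | _ => 0
  end.

Fixpoint c2_threshold d (f : c2_form d) : nat :=
  match f with
  | CNeg g => c2_threshold g
  | CAnd g h => maxn (c2_threshold g) (c2_threshold h)
  | CExists k _ g => maxn k (c2_threshold g)
  | _ => 0
  end.

Section CountingGame.
Variables (d : nat) (G H : graph d) (C : finType) (K : nat).
Variable Z : nat -> (bool -> G) -> (bool -> H) -> Prop.
Hypothesis K_gt0 : 0 < K.
Hypothesis Z_atoms : forall q g h, Z q g h ->
  [/\ forall z i, lab (g z) i = lab (h z) i,
      forall z1 z2, (g z1 == g z2) = (h z1 == h z2) &
      forall z1 z2, edge (g z1) (g z2) = edge (h z1) (h z2)].
Hypothesis Z_step : forall q g h z, Z q.+1 g h ->
  exists (cG : G -> C) (cH : H -> C),
    (forall a b, cG a = cH b -> Z q (upd2 g z a) (upd2 h z b)) /\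
    (forall c, minn K #|[pred a | cG a == c]| = minn K #|[pred b | cH b == c]|).

Lemma c2_sat_game f q g h : c2_rank f <= q -> c2_threshold f <= K ->
  Z q g h -> c2_sat g f = c2_sat h f.
Proof.
elim: f q g h => [i z|z1 z2|z1 z2|f IH|f1 IH1 f2 IH2|k z f IH] q g h /=.
- by move=> _ _ /Z_atoms[-> _ _].
- by move=> _ _ /Z_atoms[_ _ ->].
- by move=> _ _ /Z_atoms[_ -> _].
- by move=> rf tf Zgh; rewrite (IH q g h).
- rewrite !geq_max => /andP[r1 r2] /andP[t1 t2] Zgh.
  by rewrite (IH1 q g h) ?(IH2 q g h).
- case: q => // q; rewrite ltnS geq_max => rf /andP[kK tf] Zgh.
  have [cG [cH [Zupd cards]]] := Z_step z Zgh.
  apply: (leq_card_transfer K_gt0 cards kK) => a b /Zupd.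
  exact: IH.
Qed.

End CountingGame.

Definition lt_edge {N} : rel 'I_N := fun i j => i < j.

Definition twisted_edge {N} P : rel 'I_N := fun i j =>
  if ((i == P :> nat) && (j == P.+2 :> nat)) || ((i == P.+2 :> nat) && (j == P :> nat))
  then j < i else i < j.

Lemma lt_edge_irr N : irreflexive (@lt_edge N).
Proof. by move=> i; rewrite /lt_edge ltnn. Qed.

Lemma twisted_edge_irr P N : irreflexive (@twisted_edge N P).
Proof. by move=> i; rewrite /twisted_edge; case: ifP; lia. Qed.

Lemma lt_edge_tournament N (a x : 'I_N) : lt_edge a x = (a != x) && ~~ lt_edge x a.
Proof. by rewrite /lt_edge -val_eqE /=; lia. Qed.

Lemma twisted_edge_tournament P N (a x : 'I_N) :
  twisted_edge P a x = (a != x) && ~~ twisted_edge P x a.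
Proof. by rewrite /twisted_edge -val_eqE /=; do 2 case: ifP; lia. Qed.

Lemma twisted_edgeEl P N (u a : 'I_N) :
  u != P :> nat -> u != P.+2 :> nat -> twisted_edge P u a = lt_edge u a.
Proof. by rewrite /twisted_edge /lt_edge; case: ifP; lia. Qed.

Lemma twisted_edgeEr P N (u a : 'I_N) :
  a != P :> nat -> a != P.+2 :> nat -> twisted_edge P u a = lt_edge u a.
Proof. by rewrite /twisted_edge /lt_edge; case: ifP; lia. Qed.

Lemma lt_edge_linear N : strict_linear_order (@lt_edge N).
Proof.
apply/strict_linear_orderP; split=> [i|j i k|i j]; rewrite /lt_edge.
- exact: ltnn.
- exact: ltn_trans.
- by rewrite -val_eqE neq_ltn.
Qed.

Lemma twisted_edge_not_linear P N : P.+2 < N -> ~~ strict_linear_order (@twisted_edge N P).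
Proof.
move=> PN; apply/strict_linear_orderP => -[_ trans _].
have P0N : P < N by lia.
have P1N : P.+1 < N by lia.
have := trans (Ordinal P1N) (Ordinal P0N) (Ordinal PN).
by rewrite /twisted_edge /= !eqxx; do !case: eqP => //=; lia.
Qed.

Definition middle {N} B (a : 'I_N) := (B <= a) && (a < N - B).

Definition end_view {N} B (a : 'I_N) : option 'I_N := if middle B a then None else Some a.

Lemma middle_mono N B B' (a : 'I_N) : B <= B' -> middle B' a -> middle B a.
Proof. by rewrite /middle; lia. Qed.

Lemma end_view_mono N B B' (a b : 'I_N) : B <= B' ->
  end_view B' a = end_view B' b -> end_view B a = end_view B b.
Proof.
move=> BB'; rewrite /end_view.
case: (boolP (middle B' a)) => ma; case: (boolP (middle B' b)) => mb //.
  by rewrite !(middle_mono BB').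
by case=> ->.
Qed.

Lemma leq_card_ord_interval N lo n :
  lo + n <= N -> n <= #|[pred a : 'I_N | lo <= a < lo + n]|.
Proof.
move=> le_N; apply/card_geqP; exists (pmap insub (iota lo n)); split.
- by rewrite pmap_sub_uniq ?iota_uniq.
- rewrite size_pmap_sub -[RHS](size_iota lo n) -count_predT.
  by apply: eq_in_count => i; rewrite mem_iota /=; lia.
- by move=> a; rewrite mem_pmap_sub mem_iota inE.
Qed.

Lemma lt_edge_class_large N B n (x : 'I_N) e : middle (B + n) x ->
  n <= #|[pred a | (a != x) && (lt_edge x a == e) && middle B a]|.
Proof.
rewrite /middle => x_mid; set lo := if e then x.+1 else x - n.
apply: (leq_trans (leq_card_ord_interval (N := N) (lo := lo) _)); first by case: e @lo; lia.
apply: subset_leq_card; apply/subsetP => a; rewrite !inE /lt_edge -val_eqE /=.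
by case: e @lo; lia.
Qed.

Lemma card_val_mem N (s : seq nat) : #|[pred a : 'I_N | val a \in s]| <= size s.
Proof.
rewrite cardE -(size_map val); apply: uniq_leq_size.
  by rewrite map_inj_uniq ?enum_uniq //; apply: val_inj.
by move=> i /mapP[a]; rewrite mem_enum inE => ? ->.
Qed.

Lemma twisted_edge_class_large P N B n (x : 'I_N) e : middle (B + n) x ->
  n - 2 <= #|[pred a | (a != x) && (twisted_edge P x a == e) && middle B a]|.
Proof.
move=> x_mid; set A := [pred a | (a != x) && (lt_edge x a == e) && middle B a].
set T := [pred a : 'I_N | val a \in [:: P; P.+2]].
have A_large : n <= #|A| := lt_edge_class_large e x_mid.
have T_small : #|[predI A & T]| <= 2.
  by apply: leq_trans (card_val_mem N [:: P; P.+2]); apply/subset_leq_card/subsetP => a /andP[].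
have : n <= 2 + #|[predD A & T]|.
  by rewrite -(cardID T A) in A_large; apply: leq_trans A_large (leq_add T_small _).
rewrite -leq_subLR => /leq_trans; apply.
apply/subset_leq_card/subsetP => a; rewrite !inE => /andP[/norP[aP aP2] /andP[/andP[ax xa] a_mid]].
by rewrite ax a_mid twisted_edgeEr ?xa.
Qed.

Lemma card_pred1_and (T : finType) (x : T) (p : pred T) :
  #|[pred a | (a == x) && p a]| = p x.
Proof.
case: (boolP (p x)) => px.
  by apply: (@eq_card1 _ x) => a; rewrite !inE; case: eqVneq => [->|].
by apply: eq_card0 => a; rewrite !inE; case: eqVneq => [->|]; rewrite ?(negbTE px).
Qed.

Definition chain_graph d N : graph d :=
  @Graph d 'I_N (@lt_edge N) (@lt_edge_irr N) (fun _ => [ffun => false]).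

Definition twisted_graph d P N : graph d :=
  @Graph d 'I_N (@twisted_edge N P) (@twisted_edge_irr P N) (fun _ => [ffun => false]).

Definition pebble_colour N (e : rel 'I_N) B (x a : 'I_N) := (a == x, e x a, end_view B a).

Lemma pebble_colour_middleE N (e : rel 'I_N) B (x a : 'I_N) b :
  (pebble_colour e B x a == (false, b, None)) = (a != x) && (e x a == b) && middle B a.
Proof. by rewrite /pebble_colour /end_view !xpair_eqE eqbF_neg; case: middle. Qed.

Lemma card_pebble_colour_self N (e : rel 'I_N) B (x : 'I_N) b v :
  #|[pred a | pebble_colour e B x a == (true, b, v)]| = (e x x == b) && (end_view B x == v).
Proof.
rewrite -(card_pred1_and x (fun a => (e x a == b) && (end_view B a == v))).
by apply: eq_card => a; rewrite !inE /pebble_colour !xpair_eqE eqb_id andbA.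
Qed.

Section TwistedChainGame.
Variables (K Q P N : nat).
Local Notation S := K.+2.
Hypothesis twist_far_left : Q * S <= P.
Hypothesis twist_far_right : P.+3 + Q * S <= N.

Definition game_inv q (g h : bool -> 'I_N) : Prop :=
  [/\ q <= Q, forall z, end_view (q * S) (g z) = end_view (q * S) (h z),
      forall z1 z2, (g z1 == g z2) = (h z1 == h z2) &
      forall z1 z2, lt_edge (g z1) (g z2) = twisted_edge P (h z1) (h z2)].

Lemma game_inv_upd q g h z a b : game_inv q.+1 g h ->
  pebble_colour (@lt_edge N) (q * S) (g (~~ z)) a =
    pebble_colour (twisted_edge P) (q * S) (h (~~ z)) b ->
  game_inv q (upd2 g z a) (upd2 h z b).
Proof.
case=> lt_qQ views eqs edges [eq_ab edge_ab view_ab].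
have other z' : (z' == z) = false -> z' = ~~ z by case: (z); case: z'.
split=> [|z'|z1 z2|z1 z2]; rewrite /upd2.
- exact: ltnW.
- case: ifP => [_ //|/other ->]; apply: end_view_mono (views _).
  exact: leq_mul (leqnSn q) (leqnn S).
- case: ifP => [_|/other ->]; case: ifP => [_|/other ->] //; first by rewrite !eqxx.
  by rewrite eq_sym eq_ab eq_sym.
- case: ifP => [_|/other ->]; case: ifP => [_|/other ->] //.
    by rewrite lt_edge_irr twisted_edge_irr.
  by rewrite lt_edge_tournament twisted_edge_tournament eq_ab edge_ab.
Qed.

Lemma pebble_colour_card_middle B (x y : 'I_N) : B + S <= Q * S ->
  middle (B + S) x -> middle (B + S) y -> forall c,
  minn K #|[pred a | pebble_colour lt_edge B x a == c]| =
  minn K #|[pred b | pebble_colour (twisted_edge P) B y b == c]|.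
Proof.
move=> level_le x_mid y_mid.
have [x_mid' y_mid'] := conj (middle_mono (leq_addr S B) x_mid) (middle_mono (leq_addr S B) y_mid).
case=> [[[] b] v].
  by rewrite !card_pebble_colour_self lt_edge_irr twisted_edge_irr /end_view x_mid' y_mid'.
case: v => [p|].
  congr minn; apply: eq_card => a; rewrite !inE /pebble_colour /end_view !xpair_eqE.
  case: ifP => a_mid; first by rewrite !andbF.
  have [aP aP2] : a != P :> nat /\ a != P.+2 :> nat by move: a_mid; rewrite /middle; lia.
  have [ax ay] : a != x /\ a != y.
    by rewrite -!val_eqE /=; move: a_mid x_mid y_mid; rewrite /middle; lia.
  have xy_a : (x < a) = (y < a) by move: a_mid x_mid y_mid; rewrite /middle; lia.
  by rewrite twisted_edgeEr // /lt_edge (negbTE ax) (negbTE ay) xy_a.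
set Gx := [pred a | (a != x) && (lt_edge x a == b) && middle B a].
set Hy := [pred a | (a != y) && (twisted_edge P y a == b) && middle B a].
have Gx_large : K <= #|Gx| := leq_trans (ltnW (leqnSn K.+1)) (lt_edge_class_large b x_mid).
have Hy_large : K <= #|Hy| by have := twisted_edge_class_large P b y_mid; rewrite !subSS subn0.
rewrite (eq_card (B := Gx)) => [|a]; last by rewrite !inE pebble_colour_middleE.
rewrite [in RHS](eq_card (B := Hy)) => [|a]; last by rewrite !inE pebble_colour_middleE.
by rewrite (minn_idPl Gx_large) (minn_idPl Hy_large).
Qed.

Lemma pebble_colour_card q (x y : 'I_N) : q < Q ->
  end_view (q.+1 * S) x = end_view (q.+1 * S) y -> forall c,
  minn K #|[pred a | pebble_colour lt_edge (q * S) x a == c]| =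
  minn K #|[pred b | pebble_colour (twisted_edge P) (q * S) y b == c]|.
Proof.
move=> lt_qQ; have := leq_mul lt_qQ (leqnn S); rewrite mulSn addnC => level_le views.
case: (boolP (middle (q * S + S) x)) => x_mid.
  apply: pebble_colour_card_middle => //.
  by move: views; rewrite /end_view x_mid; case: ifP.
have <- : x = y by move: views; rewrite /end_view (negbTE x_mid); case: ifP => // _ [].
have [xP xP2] : x != P :> nat /\ x != P.+2 :> nat by move: x_mid; rewrite /middle; lia.
by move=> c; congr minn; apply: eq_card => a; rewrite !inE /pebble_colour twisted_edgeEl.
Qed.

Lemma game_inv_step q g h z : game_inv q.+1 g h ->
  exists cG cH : 'I_N -> bool * bool * option 'I_N,
    (forall a b, cG a = cH b -> game_inv q (upd2 g z a) (upd2 h z b)) /\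
    (forall c, minn K #|[pred a | cG a == c]| = minn K #|[pred b | cH b == c]|).
Proof.
move=> inv; exists (pebble_colour lt_edge (q * S) (g (~~ z))).
exists (pebble_colour (twisted_edge P) (q * S) (h (~~ z))).
split=> [a b|]; first exact: game_inv_upd.
by case: inv => lt_qQ views _ _; apply: pebble_colour_card.
Qed.

Lemma chain_twisted_c2_equiv d f (x : 'I_N) : 0 < K ->
  c2_rank f <= Q -> c2_threshold f <= K ->
  c2_sat (G := chain_graph d N) (fun _ => x) f = c2_sat (G := twisted_graph d P N) (fun _ => x) f.
Proof.
move=> K_gt0 rank_f threshold_f.
apply: (@c2_sat_game d (chain_graph d N) (twisted_graph d P N) _ K game_inv K_gt0 _ _ f Q)
  => //.
- by move=> q g h [_ _ eqs edges]; split.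
- exact: game_inv_step.
- by split=> // z1 z2; rewrite lt_edge_irr twisted_edge_irr.
Qed.

End TwistedChainGame.

Lemma phi_Lin_not_c2 d : ~ c2_expressible (phi_Lin d).
Proof.
case=> f [_ f_Lin].
pose K := maxn 1 (c2_threshold f); pose Q := c2_rank f; pose P := Q * K.+2.
pose N := (P + Q * K.+2).+3.
have far_right : P.+3 + Q * K.+2 <= N by rewrite !addSn.
have twist_in : P.+2 < N by rewrite !ltnS leq_addr.
have := @chain_twisted_c2_equiv K Q P N (leqnn _) far_right d f ord0.
rewrite !f_Lin /phi_Lin /= lt_edge_linear => /(_ (leq_maxl _ _) (leqnn _) (leq_maxr _ _)).
by move=> twisted_linear; move: (twisted_edge_not_linear twist_in); rewrite -twisted_linear.
Qed.

Theorem corollary1 (R : realType) (d : nat) :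
  fo_expressible (phi_Lin d) /\ acr_expressible R (phi_Lin d) /\
  ~ c2_expressible (phi_Lin d).
Proof. by split; [|split]; [apply: phi_Lin_fo | apply: phi_Lin_acr | apply: phi_Lin_not_c2]. Qed.
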